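(* Let $(E,C)$ be a separated graph with $E^0,E^1$ countable, in which all edges have the same source $v_0$ and the range map is injective, let $S\subseteq C_{fin}$ and $K$ a field. Let $\pi:AL_K(E,C,S)\to\mathrm{Hom}_K(M)$ be the representation arising from a branching system obtained by the construction described in the context. Let $x\in AL_K(E,C,S)$ be a nonzero element of the form $$x=\gamma_0v_0+\sum_{j=1}^N\gamma_j\, e_1^j(e_1^j)^*e_2^j(e_2^j)^*\cdots e_{n_j}^j(e_{n_j}^j)^*,$$ where $\gamma_j\in K$ and the $e_i^j$ are edges. Then $\pi(x)\neq 0$.
   Context: A separated graph is a pair $(E,C)$ where $E=(E^0,E^1,r,s)$ is a directed graph and $C=\bigcup_{v\in E^0}C_v$, where for each non-sink $v$, $C_v$ is a partition of $s^{-1}(v)$ into pairwise disjoint nonempty sets; $C_{fin}$ is the set of finite $Y\in C$. The Cohn-Leavitt algebra $L_K(E,C,S)$ is the universal $K$-algebra generated by pairwise orthogonal idempotents $\{v:v\in E^0\}$ and elements $\{e,e^*:e\in E^1\}$ subject to: $s(e)e=er(e)=e$; $r(e)e^*=e^*s(e)=e^*$; $e^*f=\delta_{e,f}r(e)$ for $e,f\in Y$, $Y\in C$; $v=\sum_{e\in X}ee^*$ for every $X\in S\cap C_v$, $v$ non-sink. The abelianized Cohn-Leavitt algebra $AL_K(E,C,S)$ is the quotient of $L_K(E,C,S)$ by the ideal generated by all $\lambda\lambda^*\beta\beta^*-\beta\beta^*\lambda\lambda^*$ with $\lambda,\beta$ in the multiplicative semigroup generated by $E^1\cup(E^1)^*$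 (where $(a_1\cdots a_k)^*=a_k^*\cdots a_1^*$, $(e^* )^*=e$). Construction of the branching system: enumerate $E^0=\{w_0,w_1,\dots\}$ and put $D_{w_i}=[i,i+1)\subseteq\mathbb{R}$, $\mathfrak{X}=\bigcup_i D_{w_i}$. For each non-sink $v$ enumerate $C_v=\{Y_1,Y_2,\dots\}$ and let $\widetilde{Y_j}=Y_j\cup\{\text{one extra symbol}\}$ if $Y_j\notin S$ and $\widetilde{Y_j}=Y_j$ if $Y_j\in S$. Partition $D_v$ into $|\widetilde{Y_1}|$ left-closed right-open intervals indexed by $\widetilde{Y_1}$, and for $e\in Y_1$ let $R_e$ be the interval indexed by $e$. Inductively, given the (countable) partition of $D_v$ into left-closed right-open intervals obtained at stage $n$, partition each of its intervals into $|\widetilde{Y_{n+1}}|$ left-closed right-open intervals indexed by $\widetilde{Y_{n+1}}$, and for $e\in Y_{n+1}$ let $R_e$ be the union of all those subintervals indexed by $e$. For each $e\in E^1$, $R_e$ is a disjoint union of countably many left-closed right-open intervals $\{J_k\}_{k\in\Delta}$; partition $D_{r(e)}$ into $|\Delta|$ left-closed right-open intervals $\{D_k\}_{k\in\Delta}$, choose bijections $D_k\to J_k$ (e.g. linear), and let $f_e:D_{r(e)}\to R_e$ be the resulting bijection. $M$ is the $K$-module of all functions $\mathfrak{X}\to K$, and $\pi$ is the algebra homomorphism (well defined on $AL_K(E,C,S)$) determined by $\pi(v)\phi=\chi_{D_v}\phi$, $\pi(e)\phi=$ the function equal to $\phi(f_e^{-1}(x))$ on $R_e$ and $0$ elsewhere,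 $\pi(e^* )\phi=$ the function equal to $\phi(f_e(x))$ on $D_{r(e)}$ and $0$ elsewhere. *)

From Stdlib Require Import Reals ClassicalEpsilon.
From mathcomp Require Import all_boot all_order all_algebra.
Set Implicit Arguments. Unset Strict Implicit. Unset Printing Implicit Defensive.
Import GRing.Theory.
Local Open Scope ring_scope.

Definition pdec (P : Prop) : bool :=
  if excluded_middle_informative P then true else false.

Definition Ico (p : R * R) (x : R) : Prop := Rle (fst p) x /\ Rlt x (snd p).

Section FreeAlgebra.
Context (K : fieldType) (E0 E1 : countType).

(* generators of the (non-unital) free algebra: vertices v, edges e, ghosts e* *)
Definition gen := (E0 + (E1 + E1))%type.
Definition gV (v : E0) : gen := inl v.
Definition gE (e : E1) : gen := inr (inl e).
Definition gS (e : E1) : gen := inr (inr e).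

(* elements of the free K-algebra: formal K-linear combinations of words;
   two formal sums represent the same element iff they have the same
   coefficient function [coef]. *)
Definition fsum := seq (K * seq gen).
Definition coef (s : fsum) (w : seq gen) : K :=
  \sum_(p <- s) (if p.2 == w then p.1 else 0).

Definition star_gen (g : gen) : gen :=
  match g with
  | inl v => inl v
  | inr (inl e) => inr (inr e)
  | inr (inr e) => inr (inl e)
  end.
Definition star_word (w : seq gen) : seq gen := rev (map star_gen w).

Definition is_path_gen (g : gen) : bool :=
  match g with inl _ => false | inr _ => true end.
Definition semigroup_word (w : seq gen) : Prop := w <> [::] /\ all is_path_gen w.

Definition sandwich (c : K) (a : seq gen) (r : fsum) (b : seq gen) : fsum :=
  [seq (c * p.1, a ++ p.2 ++ b) | p <- r].
End FreeAlgebra.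

Section CohnLeavitt.
Context (K : fieldType) (E0 E1 : countType) (s r : E1 -> E0)
        (Cty : Type) (cl : E1 -> Cty) (S : Cty -> Prop).
(* The separated graph (E,C): C is the set of fibres of cl (cl surjective
   ensures the blocks are nonempty). *)

Inductive relIdx :=
  | ROrth of E0 & E0                 (* v w = delta_{v,w} v            *)
  | RSrc of E1                       (* s(e) e = e                     *)
  | RRng of E1                       (* e r(e) = e                     *)
  | RRngS of E1                      (* r(e) e* = e*                   *)
  | RSrcS of E1                      (* e* s(e) = e*                   *)
  | RCK1 of E1 & E1                  (* e* f = delta_{e,f} r(e), e,f in the same Y *)
  | RCK2 of E0 & Cty & seq E1        (* v = sum_{e in X} e e*, X in S cap C_v *)
  | RAb of seq (gen E0 E1) & seq (gen E0 E1).
                                     (* l l* b b* = b b* l l*          *)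

Definition relValid (i : relIdx) : Prop :=
  match i with
  | RCK1 e f => cl e = cl f
  | RCK2 v Y l => S Y /\ uniq l /\ (forall e, (e \in l) <-> cl e = Y)
                  /\ (forall e, cl e = Y -> s e = v)
  | RAb lam bet => semigroup_word lam /\ semigroup_word bet
  | _ => True
  end.

Definition relElt (i : relIdx) : fsum K E0 E1 :=
  match i with
  | ROrth v w => (1, [:: gV E1 v; gV E1 w]) ::
                 (if v == w then [:: (-1, [:: gV E1 v])] else [::])
  | RSrc e => [:: (1, [:: gV E1 (s e); gE E0 e]); (-1, [:: gE E0 e])]
  | RRng e => [:: (1, [:: gE E0 e; gV E1 (r e)]); (-1, [:: gE E0 e])]
  | RRngS e => [:: (1, [:: gV E1 (r e); gS E0 e]); (-1, [:: gS E0 e])]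
  | RSrcS e => [:: (1, [:: gS E0 e; gV E1 (s e)]); (-1, [:: gS E0 e])]
  | RCK1 e f => (1, [:: gS E0 e; gE E0 f]) ::
                (if e == f then [:: (-1, [:: gV E1 (r e)])] else [::])
  | RCK2 v Y l => (1, [:: gV E1 v]) :: [seq (-1, [:: gE E0 e; gS E0 e]) | e <- l]
  | RAb lam bet =>
      [:: (1, lam ++ star_word lam ++ bet ++ star_word bet);
          (-1, bet ++ star_word bet ++ lam ++ star_word lam)]
  end.

(* membership in the two-sided ideal of the free algebra generated by the
   defining relations of AL_K(E,C,S) (relations of L_K(E,C,S) plus the
   abelianizing commutators). The ideal is the K-span of the products
   a * rel * b with a, b words (possibly empty). *)
Definition in_AL_ideal (x : fsum K E0 E1) : Prop :=
  exists L : seq (K * seq (gen E0 E1) * relIdx * seq (gen E0 E1)),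
    List.Forall (fun t => relValid t.1.2) L /\
    forall w, coef x w =
      coef (flatten [seq sandwich t.1.1.1 t.1.1.2 (relElt t.1.2) t.2 | t <- L]) w.

Definition AL_nonzero (x : fsum K E0 E1) : Prop := ~ in_AL_ideal x.
End CohnLeavitt.

Section Branching.
Context (E0 E1 : countType) (r : E1 -> E0) (Cty : Type) (cl : E1 -> Cty)
        (S : Cty -> Prop) (v0 : E0)
        (idx : E0 -> nat)        (* enumeration E^0 = {w_0, w_1, ...} *)
        (cidx : Cty -> nat).     (* enumeration C_{v0} = {Y_1, Y_2, ...} *)

Definition Dv (v : E0) : R * R := (INR (idx v), INR (idx v).+1).

(* t is an element of \tilde{Y_k}: an edge of Y_k, or (None) the extra
   symbol, present only when Y_k \notin S *)
Definition inTilde (k : nat) (t : option E1) : Prop :=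
  match t with
  | Some e => cidx (cl e) = k
  | None => exists Y, cidx Y = k /\ ~ S Y
  end.

(* an address of a stage-n cell: a sequence (t_1, ..., t_n), t_k in \tilde{Y_k} *)
Definition validAddr (a : seq (option E1)) : Prop :=
  forall k, (k < size a)%N -> inTilde k.+1 (nth None a k).

(* the cells (left-closed right-open intervals) of the inductive partition
   of D_{v0}: cell [::] = D_{v0}, and each cell of stage n is partitioned
   into nonempty subintervals indexed by \tilde{Y_{n+1}} *)
Definition nested_partition (cell : seq (option E1) -> R * R) : Prop :=
  cell [::] = Dv v0 /\
  forall a, validAddr a -> (exists Y, cidx Y = (size a).+1) ->
    (forall t, inTilde (size a).+1 t ->
       Rlt (fst (cell (rcons a t))) (snd (cell (rcons a t)))) /\
    (forall t t', inTilde (size a).+1 t -> inTilde (size a).+1 t' -> t <> t' ->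
       forall x, ~ (Ico (cell (rcons a t)) x /\ Ico (cell (rcons a t')) x)) /\
    (forall x, Ico (cell a) x <->
       exists t, inTilde (size a).+1 t /\ Ico (cell (rcons a t)) x).

(* the addresses indexing the intervals J_k whose union is R_e *)
Definition Jindex (e : E1) (a : seq (option E1)) : Prop :=
  validAddr a /\ size a = (cidx (cl e)).-1.

Definition Rset (cell : seq (option E1) -> R * R) (e : E1) (x : R) : Prop :=
  exists a, Jindex e a /\ Ico (cell (rcons a (Some e))) x.

(* f_e : D_{r(e)} -> R_e: D_{r(e)} is partitioned into nonempty intervals
   piece e a (a ranging over the index set of the J's) and f_e maps
   piece e a bijectively onto J_a = cell (a ++ [e]), with inverse g_e *)
Definition edge_maps (cell : seq (option E1) -> R * R)
    (piece : E1 -> seq (option E1) -> R * R) (f g : E1 -> R -> R) : Prop :=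
  forall e,
    (forall a, Jindex e a -> Rlt (fst (piece e a)) (snd (piece e a))) /\
    (forall a b, Jindex e a -> Jindex e b -> a <> b ->
       forall y, ~ (Ico (piece e a) y /\ Ico (piece e b) y)) /\
    (forall y, Ico (Dv (r e)) y <-> exists a, Jindex e a /\ Ico (piece e a) y) /\
    (forall a, Jindex e a ->
       (forall y, Ico (piece e a) y ->
          Ico (cell (rcons a (Some e))) (f e y) /\ g e (f e y) = y) /\
       (forall x, Ico (cell (rcons a (Some e))) x ->
          Ico (piece e a) (g e x) /\ f e (g e x) = x)).

(* the representation pi on M = functions to K (functions R -> K; values
   outside the union X of the D_v never matter) *)
Definition pi_gen (K : fieldType) (cell : seq (option E1) -> R * R)
    (f g : E1 -> R -> R) (x : gen E0 E1) (phi : R -> K) : R -> K :=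
  match x with
  | inl v => fun y => if pdec (Ico (Dv v) y) then phi y else 0
  | inr (inl e) => fun y => if pdec (Rset cell e y) then phi (g e y) else 0
  | inr (inr e) => fun y => if pdec (Ico (Dv (r e)) y) then phi (f e y) else 0
  end.

Definition pi_word (K : fieldType) cell f g (w : seq (gen E0 E1)) (phi : R -> K)
  : R -> K := foldr (@pi_gen K cell f g) phi w.

Definition pi_elt (K : fieldType) cell f g (x : fsum K E0 E1) (phi : R -> K)
  : R -> K := fun y => \sum_(p <- x) p.1 * pi_word cell f g p.2 phi y.
End Branching.

Definition x_elt (K : fieldType) (E0 E1 : countType) (v0 : E0) (g0 : K)
    (terms : seq (K * seq E1)) : fsum K E0 E1 :=
  (g0, [:: gV E1 v0]) ::
  [seq (t.1, flatten [seq [:: gE E0 e; gS E0 e] | e <- t.2]) | t <- terms].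

From Pilot Require Import Defs.
From Stdlib Require Import Reals ClassicalEpsilon Classical.
From mathcomp Require Import all_boot all_order all_algebra.
Set Implicit Arguments. Unset Strict Implicit. Unset Printing Implicit Defensive.
Import GRing.Theory.
Local Open Scope ring_scope.

(* Since e^* = e^* v0, x = \sum_j gamma_j e_1 e_1^* ... e_n e_n^* v0 (the term
   gamma_0 v0 having no edges).  Evaluated on the constant function 1 at the
   left end of the stage-n cell picked by a choice function c (one element of
   \tilde{Y_k} for each block), pi(x) is the sum of the gamma_j whose edges are
   all chosen by c.  So pi(x) = 0 makes this symbol vanish for every c, and it
   remains to see that such a combination lies in the defining ideal.  This goes
   by eliminating the edges one at a time: the projections e e^* commute, are
   idempotent and are orthogonal within a block; if the block of e has a choice
   unused by x, the symbol of the terms containing e vanishes separately and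
   e e^* factors out, and otherwise the block lies in S and (CK2) rewrites e e^*
   in terms of the other edges of the block. *)

Section IdealCalculus.
Variables (K : fieldType) (E0 E1 : countType) (s r : E1 -> E0) (Cty : Type)
  (cl : E1 -> Cty) (S : Cty -> Prop).
Local Notation fsum := (fsum K E0 E1).
Local Notation word := (seq (gen E0 E1)).
Local Notation ideal := (@in_AL_ideal K E0 E1 s r Cty cl S).
Implicit Types (x y z : fsum) (a b w : word) (c : K).

Lemma coef_cat x y w : coef (x ++ y) w = coef x w + coef y w.
Proof. by rewrite /coef big_cat. Qed.

Lemma coef_nil w : coef ([::] : fsum) w = 0.
Proof. by rewrite /coef big_nil. Qed.

Lemma coef_scale c x w : coef (sandwich c [::] x [::]) w = c * coef x w.
Proof.
rewrite /coef /sandwich big_map mulr_sumr; apply: eq_bigr => p _ /=.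
by rewrite cats0; case: ifP; rewrite ?mulr0.
Qed.

Lemma coef_sandwich c a b x w (W : seq word) :
  uniq W -> {subset [seq p.2 | p <- x] <= W} ->
  coef (sandwich c a x b) w =
  \sum_(u <- W) (if a ++ u ++ b == w then c * coef x u else 0).
Proof.
move=> uW sub; rewrite /coef /sandwich big_map /=.
transitivity (\sum_(u <- W) \sum_(p <- x)
   (if a ++ u ++ b == w then c * (if p.2 == u then p.1 else 0) else 0)); last first.
  apply: eq_bigr => u _; case: ifP => _; last by rewrite big1.
  by rewrite mulr_sumr.
rewrite exchange_big /=; apply: eq_big_seq => p px.
have pW : p.2 \in W by apply: sub; apply/mapP; exists p.
rewrite (bigD1_seq p.2) //= eqxx big1_seq ?addr0 // => u /andP [nu _].
by rewrite [p.2 == u]eq_sym (negbTE nu); case: ifP; rewrite ?mulr0.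
Qed.

Lemma ideal_eq_coef x y : (forall w, coef x w = coef y w) -> ideal y -> ideal x.
Proof. by move=> Exy [L [HL HE]]; exists L; split=> // w; rewrite Exy. Qed.

Lemma ideal_nil : ideal [::].
Proof. by exists [::]; split. Qed.

Lemma ideal_cat x y : ideal x -> ideal y -> ideal (x ++ y).
Proof.
move=> [L [HL HE]] [L' [HL' HE']]; exists (L ++ L'); split.
  by apply/List.Forall_app.
by move=> w; rewrite map_cat flatten_cat !coef_cat HE HE'.
Qed.

Lemma ideal_map (T : eqType) (F : T -> K * word) (l : seq T) :
  (forall t, t \in l -> ideal [:: F t]) -> ideal (map F l).
Proof.
elim: l => [|t l IH] Hl /=; first exact: ideal_nil.
apply: (@ideal_cat [:: F t]); first by apply: Hl; rewrite mem_head.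
by apply: IH => u ul; apply: Hl; rewrite inE ul orbT.
Qed.

Lemma ideal_rel i : relValid s cl S i -> ideal (relElt K s r i).
Proof.
move=> Hi; exists [:: (1, [::], i, [::])]; split; first by constructor.
move=> w /=; rewrite cats0 /sandwich /coef big_map; apply: eq_bigr => p _.
by rewrite /= mul1r cats0.
Qed.

Lemma sandwich_flatten c a b (L : seq (K * word * relIdx E0 E1 Cty * word)) :
  sandwich c a (flatten [seq sandwich t.1.1.1 t.1.1.2 (relElt K s r t.1.2) t.2 | t <- L]) b
  = flatten [seq sandwich t.1.1.1 t.1.1.2 (relElt K s r t.1.2) t.2 |
       t <- [seq (c * t.1.1.1, a ++ t.1.1.2, t.1.2, t.2 ++ b) | t <- L]].
Proof.
elim: L => //= t L IH; rewrite /sandwich map_cat -IH; congr (_ ++ _).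
by rewrite -map_comp; apply: eq_map => p /=; rewrite mulrA !catA.
Qed.

Lemma ideal_sandwich c a b x : ideal x -> ideal (sandwich c a x b).
Proof.
move=> [L [HL HE]].
exists [seq (c * t.1.1.1, a ++ t.1.1.2, t.1.2, t.2 ++ b) | t <- L]; split.
  by apply/List.Forall_map.
move=> w; rewrite -sandwich_flatten; set y := flatten _.
set W := undup ([seq p.2 | p <- x] ++ [seq p.2 | p <- y]).
have uW : uniq W by apply: undup_uniq.
rewrite !(coef_sandwich _ _ _ _ uW).
- by apply: eq_bigr => u _; rewrite HE.
- by move=> u uy; rewrite mem_undup mem_cat uy orbT.
- by move=> u ux; rewrite mem_undup mem_cat ux.
Qed.

Definition fsum_opp x : fsum := sandwich (-1) [::] x [::].
Definition AL_eq x y := ideal (x ++ fsum_opp y).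

Lemma coef_opp x w : coef (fsum_opp x) w = - coef x w.
Proof. by rewrite /fsum_opp coef_scale mulN1r. Qed.

Lemma AL_eq_coef x y : (forall w, coef x w = coef y w) -> AL_eq x y.
Proof.
move=> Exy; apply: (@ideal_eq_coef _ [::]); last exact: ideal_nil.
by move=> w; rewrite coef_cat coef_opp Exy subrr coef_nil.
Qed.

Lemma AL_eq_refl x : AL_eq x x.
Proof. exact: AL_eq_coef. Qed.

Lemma AL_eq_trans y x z : AL_eq x y -> AL_eq y z -> AL_eq x z.
Proof.
move=> Hxy Hyz; apply: ideal_eq_coef (ideal_cat Hxy Hyz) => w.
by rewrite !coef_cat !coef_opp addrA subrK.
Qed.

Lemma AL_eq_sandwich c a b x y :
  AL_eq x y -> AL_eq (sandwich c a x b) (sandwich c a y b).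
Proof.
move=> /(ideal_sandwich c a b); apply: ideal_eq_coef => w.
rewrite /fsum_opp /sandwich map_cat -!map_comp /coef !big_cat !big_map.
by congr (_ + _); apply: eq_bigr => p _ /=; rewrite !cats0 mulrCA.
Qed.

Lemma AL_eq_sym x y : AL_eq x y -> AL_eq y x.
Proof.
move=> /(ideal_sandwich (-1) [::] [::]); apply: ideal_eq_coef => w.
by rewrite coef_scale !coef_cat !coef_opp mulN1r opprD opprK addrC.
Qed.

Lemma AL_eq_cat x y x' y' : AL_eq x y -> AL_eq x' y' -> AL_eq (x ++ x') (y ++ y').
Proof.
move=> H H'; apply: ideal_eq_coef (ideal_cat H H') => w.
by rewrite !coef_cat !coef_opp !coef_cat opprD addrACA.
Qed.

Lemma AL_eq_ideal x y : AL_eq x y -> ideal y -> ideal x.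
Proof.
move=> Hxy Hy; apply: ideal_eq_coef (ideal_cat Hxy Hy) => w.
by rewrite !coef_cat coef_opp subrK.
Qed.

Lemma AL_eq_flatten (T : eqType) (F G : T -> fsum) (l : seq T) :
  (forall t, t \in l -> AL_eq (F t) (G t)) ->
  AL_eq (flatten (map F l)) (flatten (map G l)).
Proof.
elim: l => [|t l IH] Hl /=; first exact: AL_eq_refl.
apply: AL_eq_cat; first by apply: Hl; rewrite mem_head.
by apply: IH => u ul; apply: Hl; rewrite inE ul orbT.
Qed.

Lemma AL_eq_map (T : eqType) (F G : T -> K * word) (l : seq T) :
  (forall t, t \in l -> AL_eq [:: F t] [:: G t]) -> AL_eq (map F l) (map G l).
Proof.
have flatten1 (h : T -> K * word) : flatten (map (fun t => [:: h t]) l) = map h l.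
  by elim: l => //= t l ->.
by move=> /(@AL_eq_flatten _ (fun t => [:: F t]) (fun t => [:: G t])); rewrite !flatten1.
Qed.

Lemma AL_eq_transpose m x y : AL_eq m (x ++ y) -> AL_eq x (m ++ fsum_opp y).
Proof.
move=> /(ideal_sandwich (-1) [::] [::]); apply: ideal_eq_coef => w.
rewrite coef_scale !coef_cat !coef_opp !coef_cat coef_opp mulN1r !opprD !opprK.
by rewrite addrCA.
Qed.

Lemma ideal_scale c w : ideal [:: (1, w)] -> ideal [:: (c, w)].
Proof. by move/(ideal_sandwich c [::] [::]); rewrite /sandwich /= mulr1 cats0. Qed.

Local Notation AL_weq w1 w2 := (AL_eq [:: (1, w1)] [:: (1, w2)]).

Lemma AL_weq_rel w1 w2 : ideal [:: (1, w1); (-1, w2)] -> AL_weq w1 w2.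
Proof. by rewrite /AL_eq /fsum_opp /sandwich /= cats0 mulr1. Qed.

Lemma AL_weq_sandwich a b w1 w2 :
  AL_weq w1 w2 -> AL_weq (a ++ w1 ++ b) (a ++ w2 ++ b).
Proof. by move/(AL_eq_sandwich 1 a b); rewrite /sandwich /= mulr1. Qed.

Lemma AL_weq_catl a w1 w2 : AL_weq w1 w2 -> AL_weq (a ++ w1) (a ++ w2).
Proof. by move/(AL_weq_sandwich a [::]); rewrite !cats0. Qed.

Lemma AL_weq_scale c w1 w2 : AL_weq w1 w2 -> AL_eq [:: (c, w1)] [:: (c, w2)].
Proof. by move/(AL_eq_sandwich c [::] [::]); rewrite /sandwich /= mulr1 !cats0. Qed.

End IdealCalculus.

Section Monomials.
Variables (K : fieldType) (E0 E1 : countType) (s r : E1 -> E0) (Cty : Type)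
  (cl : E1 -> Cty) (S : Cty -> Prop) (v0 : E0).
Hypothesis s_v0 : forall e, s e = v0.
Local Notation word := (seq (gen E0 E1)).
Local Notation ideal := (@in_AL_ideal K E0 E1 s r Cty cl S).
Local Notation AL_eq := (@AL_eq K E0 E1 s r Cty cl S).
Local Notation AL_weq w1 w2 := (AL_eq [:: (1, w1)] [:: (1, w2)]).
Implicit Types (e f : E1) (T : seq E1) (w : word).

Definition proj e : word := [:: gE E0 e; gS E0 e].

Definition monomial T : word := flatten (map proj T) ++ [:: gV E1 v0].

Definition msum (x : seq (K * seq E1)) : fsum K E0 E1 :=
  [seq (t.1, monomial t.2) | t <- x].

Lemma proj_comm e f w : AL_weq (proj f ++ proj e ++ w) (proj e ++ proj f ++ w).
Proof.
pose ab := RAb Cty [:: gE E0 f] [:: gE E0 e].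
have ab_valid : relValid s cl S ab by [].
apply: AL_weq_rel.
have := ideal_sandwich 1 [::] w (@ideal_rel K _ _ s r _ cl S ab ab_valid).
by apply: ideal_eq_coef => u; rewrite /sandwich /= !mul1r.
Qed.

Lemma proj_idem e w : AL_weq (proj e ++ proj e ++ w) (proj e ++ w).
Proof.
apply: (AL_eq_trans (y := [:: (1, [:: gE E0 e; gV E1 (r e); gS E0 e] ++ w)]));
  apply: AL_weq_rel.
- have := ideal_sandwich 1 [:: gE E0 e] (gS E0 e :: w)
     (@ideal_rel K _ _ s r _ cl S (RCK1 E0 Cty e e) erefl).
  by apply: ideal_eq_coef => u; rewrite /= eqxx /sandwich /= !mul1r.
- have := ideal_sandwich 1 [::] (gS E0 e :: w)
    (@ideal_rel K _ _ s r _ cl S (RRng E0 Cty e) Logic.I).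
  by apply: ideal_eq_coef => u; rewrite /sandwich /= !mul1r.
Qed.

Lemma proj_orth e f w : cl e = cl f -> e != f -> ideal [:: (1, proj e ++ proj f ++ w)].
Proof.
move=> Hcl nef.
have := ideal_sandwich 1 [:: gE E0 e] (gS E0 f :: w)
  (@ideal_rel K _ _ s r _ cl S (RCK1 E0 Cty e f) Hcl).
by apply: ideal_eq_coef => u; rewrite /= (negbTE nef) /sandwich /= !mul1r.
Qed.

Lemma monomial_cons e T : monomial (e :: T) = proj e ++ monomial T.
Proof. by []. Qed.

Lemma monomial_pull e T :
  e \in T -> AL_weq (monomial T) (proj e ++ monomial (filter (predC1 e) T)).
Proof.
elim: T => //= f T IH; rewrite inE monomial_cons.
have [Efe _|nef /= eT] := eqVneq f e; last first.
  apply: AL_eq_trans (AL_weq_catl (proj f) (IH eT)) _.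
  by rewrite monomial_cons; apply: proj_comm.
subst f; have [eT|eNT] := boolP (e \in T).
  exact: AL_eq_trans (AL_weq_catl (proj e) (IH eT)) (proj_idem _ _).
suff -> : filter (predC1 e) T = T by apply: AL_eq_refl.
by apply/all_filterP/allP => g gT /=; apply: contraNneq eNT => <-.
Qed.

Lemma monomial_clash e f T :
  e \in T -> f \in T -> e != f -> cl e = cl f -> ideal [:: (1, monomial T)].
Proof.
move=> eT fT nef Hcl.
have fT' : f \in filter (predC1 e) T by rewrite mem_filter /= eq_sym nef.
apply: AL_eq_ideal (proj_orth _ Hcl nef).
exact: AL_eq_trans (monomial_pull eT) (AL_weq_catl _ (monomial_pull fT')).
Qed.

Lemma monomial_vertex T : AL_weq ([:: gV E1 v0] ++ monomial T) (monomial T).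
Proof.
apply: AL_weq_rel; case: T => [|e T].
  have := @ideal_rel K _ _ s r _ cl S (ROrth E1 Cty v0 v0) Logic.I.
  by apply: ideal_eq_coef => u; rewrite /= eqxx.
have := ideal_sandwich 1 [::] (gS E0 e :: monomial T)
  (@ideal_rel K _ _ s r _ cl S (RSrc E0 Cty e) Logic.I).
by apply: ideal_eq_coef => u; rewrite /sandwich /= !mul1r s_v0.
Qed.

Lemma monomial_CK2 T Y (l : seq E1) :
  S Y -> uniq l -> (forall e, e \in l <-> cl e = Y) ->
  AL_eq [:: (1, monomial T)] [seq (1, monomial (f :: T)) | f <- l].
Proof.
move=> SY ul Hl; apply: AL_eq_trans (AL_eq_sym (monomial_vertex T)) _.
have ck2_valid : relValid s cl S (RCK2 v0 Y l).
  by split; [|split; [|split]] => // e _.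
have := ideal_sandwich 1 [::] (monomial T) (@ideal_rel K _ _ s r _ cl S _ ck2_valid).
rewrite /AL_eq; congr ideal; rewrite /sandwich /fsum_opp /= mulr1 -!map_comp.
by congr (_ :: _); rewrite /sandwich -map_comp; apply: eq_map => f /=; rewrite mul1r mulr1 cats0.
Qed.

Lemma projs_monomial T :
  T != [::] -> AL_weq (flatten (map proj T)) (monomial T).
Proof.
elim: T => //= e T IH _; case: T IH => [|f T] IH; last first.
  exact: (AL_weq_catl (proj e) (IH erefl)).
apply: AL_eq_sym; apply: AL_weq_rel.
have := ideal_sandwich 1 [:: gE E0 e] [::]
  (@ideal_rel K _ _ s r _ cl S (RSrcS E0 Cty e) Logic.I).
by apply: ideal_eq_coef => u; rewrite /sandwich /= !mul1r s_v0.
Qed.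

Lemma x_elt_msum (g0 : K) (terms : seq (K * seq E1)) :
  (forall t, t \in terms -> t.2 <> [::]) ->
  AL_eq (x_elt v0 g0 terms) (msum ((g0, [::]) :: terms)).
Proof.
move=> terms_ne; apply: (@AL_eq_cat _ _ _ _ _ _ _ _ [:: _] [:: _]).
  exact: AL_eq_refl.
apply: AL_eq_map => t tT /=; apply: AL_weq_scale; apply: projs_monomial.
exact/eqP/terms_ne.
Qed.

End Monomials.

Section ChoiceFunctions.
Variables (K : fieldType) (E1 : countType) (Cty : Type) (cl : E1 -> Cty)
  (S : Cty -> Prop) (cidx : Cty -> nat).
Local Notation tilde := (inTilde cl S cidx).
Implicit Types (c : nat -> option E1) (e f : E1) (T : seq E1)
  (x : seq (K * seq E1)).

Definition block_index e := cidx (cl e).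

(* A choice function picks, in every block Y_k, an element of \tilde{Y_k}; the
   cells of the branching system are indexed by the finite pieces of these. *)
Definition admissible c := forall k, (exists Y, cidx Y = k) -> tilde k (c k).

Definition selects c T := all (fun e => c (block_index e) == Some e) T.

(* the value of pi(msum x)(1) on the cells selected by c *)
Definition eval c x := \sum_(t <- x) t.1 * (selects c t.2)%:R.

Definition eval_null x := forall c, admissible c -> eval c x = 0.

Definition update c k (t : option E1) := fun j => if j == k then t else c j.

Definition has_edge e : pred (K * seq E1) := fun t => e \in t.2.

Lemma admissible_update c k t : admissible c -> tilde k t -> admissible (update c k t).
Proof. by move=> Hc Ht j Hj; rewrite /update; case: eqP => [->|_] //; apply: Hc. Qed.

Lemma admissible_exists : (forall Y, exists e, cl e = Y) -> exists c, admissible c.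
Proof.
move=> cl_surj.
exists (fun k => match excluded_middle_informative (exists e, block_index e == k) with
                | left He => Some (xchoose He) | right _ => None end).
move=> k [Y <-]; case: excluded_middle_informative => [He|]; last first.
  by have [e <-] := cl_surj Y; case; exists e.
by apply/eqP; exact: xchooseP He.
Qed.

Lemma selects_pull c e T : e \in T ->
  selects c T = (c (block_index e) == Some e) && selects c (filter (predC1 e) T).
Proof.
move=> eT; apply/allP/andP => [H|[He /allP H] f fT].
  by split; [apply: H | apply/allP => f; rewrite mem_filter => /andP [_ /H]].
by have [->|nfe] := eqVneq f e; [|apply: H; rewrite mem_filter /= nfe].
Qed.

Lemma selects_update c k t T :
  (forall f, f \in T -> block_index f = k -> (c k == Some f) = (t == Some f)) ->
  selects (update c k t) T = selects c T.
Proof.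
move=> H; apply: eq_in_all => f fT; rewrite /update.
case: ifP => [/eqP bf|//]; by rewrite -(H f fT bf) bf.
Qed.

Lemma eval_filter_split c x (P : pred (K * seq E1)) :
  eval c x = eval c (filter P x) + eval c (filter (predC P) x).
Proof. by rewrite /eval !big_filter (bigID P). Qed.

Lemma eval_cat c x y : eval c (x ++ y) = eval c x + eval c y.
Proof. by rewrite /eval big_cat. Qed.

Lemma eval_unselected c e x :
  c (block_index e) != Some e -> eval c (filter (has_edge e) x) = 0.
Proof.
move=> nce; rewrite /eval big_filter big1 // => t et.
by rewrite (selects_pull _ et) (negbTE nce) mulr0.
Qed.

End ChoiceFunctions.

Section Completeness.
Variables (K : fieldType) (E0 E1 : countType) (s r : E1 -> E0) (Cty : Type)
  (cl : E1 -> Cty) (S : Cty -> Prop) (v0 : E0) (cidx : Cty -> nat).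
Hypothesis s_v0 : forall e, s e = v0.
Hypothesis cl_surj : forall Y, exists e, cl e = Y.
Hypothesis cidx_inj : injective cidx.
Hypothesis S_fin : forall Y, S Y -> exists l : seq E1, forall e, (e \in l) <-> cl e = Y.
Local Notation ideal := (@in_AL_ideal K E0 E1 s r Cty cl S).
Local Notation AL_eq := (@AL_eq K E0 E1 s r Cty cl S).
Local Notation msum := (@msum K E0 E1 v0).
Local Notation blk := (block_index cl cidx).
Local Notation tilde := (inTilde cl S cidx).
Local Notation admissible := (admissible cl S cidx).
Local Notation eval := (@eval K E1 Cty cl cidx).
Local Notation eval_null := (@eval_null K E1 Cty cl S cidx).
Local Notation has_edge := (@has_edge K E1).
Implicit Types (e f : E1) (F T : seq E1) (x : seq (K * seq E1)).

Definition edges_in F x := all (fun t => all (fun f => f \in F) t.2) x.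

Definition strip e x : seq (K * seq E1) :=
  [seq (t.1, filter (predC1 e) t.2) | t <- x].

Definition sole_in_block e : pred (K * seq E1) :=
  fun t => all (fun f => (f == e) || (blk f != blk e)) t.2.

Definition complete_on F := forall x, edges_in F x -> eval_null x -> ideal (msum x).

Lemma edges_in_filter F x (P : pred (K * seq E1)) :
  edges_in F x -> edges_in F (filter P x).
Proof. by move=> Hx; apply/allP => t; rewrite mem_filter => /andP [_ /(allP Hx)]. Qed.

Lemma edges_in_drop e F x :
  edges_in (e :: F) x -> edges_in F (filter (predC (has_edge e)) x).
Proof.
move=> Hx; apply/allP => t; rewrite mem_filter => /andP [eNt tx].
apply/allP => f ft; move: (allP (allP Hx t tx) f ft); rewrite inE.
by case/orP => // /eqP fe; move: eNt; rewrite /= /has_edge -fe ft.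
Qed.

Lemma edges_in_strip e F x : edges_in (e :: F) x -> edges_in F (strip e x).
Proof.
move=> Hx; apply/allP => u /mapP [t tx ->]; apply/allP => f.
rewrite mem_filter => /andP [nfe ft].
by move: (allP (allP Hx t tx) f ft); rewrite inE (negbTE nfe).
Qed.

Lemma msum_filter_split x (P : pred (K * seq E1)) :
  AL_eq (msum x) (msum (filter P x) ++ msum (filter (predC P) x)).
Proof.
apply: AL_eq_coef => w.
by rewrite coef_cat /coef /msum !big_map !big_filter (bigID P).
Qed.

Lemma complete_nil : complete_on [::].
Proof.
move=> x Hx Hnull; have [c Hc] := admissible_exists S cidx cl_surj.
have x_nil t : t \in x -> t.2 = [::] by move/(allP Hx); case: t.2.
apply: (ideal_eq_coef (y := [::])); last exact: ideal_nil.
move=> w; rewrite coef_nil /coef big_map.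
transitivity (\sum_(t <- x) if [:: gV E1 v0] == w then t.1 else 0).
  by apply: eq_big_seq => t tx; rewrite /= (x_nil t tx).
case: eqP => _; last by rewrite big1.
rewrite -[RHS](Hnull c Hc) /eval; apply: eq_big_seq => t tx.
by rewrite (x_nil t tx) /= mulr1.
Qed.

(* A choice [t] of the block of [e] that no edge of [x] selects kills the
   [e]-terms of [x] without affecting the others. *)
Lemma eval_null_drop e F t x :
  tilde (blk e) t -> (forall f, f \in e :: F -> t != Some f) ->
  edges_in (e :: F) x -> eval_null x -> eval_null (filter (predC (has_edge e)) x).
Proof.
move=> Ht Hfree Hx Hnull c Hc.
have [ce|nce] := eqVneq (c (blk e)) (Some e); last first.
  have := Hnull c Hc.
  by rewrite (eval_filter_split _ _ _ _ (has_edge e)) eval_unselected ?add0r.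
have Hc' : admissible (update c (blk e) t) by apply: admissible_update.
transitivity (eval (update c (blk e) t) (filter (predC (has_edge e)) x)).
  rewrite /eval; apply: eq_big_seq => u; rewrite mem_filter => /andP [eNu ux].
  rewrite selects_update // => f fu bf; rewrite ce.
  have nfe : f != e by apply: contraNneq eNu => <-.
  have /negbTE -> : t != Some f by apply: Hfree; apply: (allP (allP Hx u ux)).
  by apply/negbTE; apply: contra nfe => /eqP [->].
have := Hnull _ Hc'.
rewrite (eval_filter_split _ _ _ _ (has_edge e)) eval_unselected ?add0r //.
by rewrite /update eqxx; apply: Hfree; rewrite mem_head.
Qed.

Lemma eval_null_strip e x :
  all (has_edge e) x -> eval_null x -> eval_null (strip e (filter (sole_in_block e) x)).
Proof.
move=> He Hnull c Hc.
have Hc' : admissible (update c (blk e) (Some e)) by apply: admissible_update.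
have Hclash : eval (update c (blk e) (Some e)) (filter (predC (sole_in_block e)) x) = 0.
  rewrite /eval big1_seq // => u /andP [_]; rewrite mem_filter => /andP [nlone _].
  have [f fu /norP [nfe /negbNE /eqP bf]] :
      exists2 f, f \in u.2 & ~~ ((f == e) || (blk f != blk e)).
    by apply/hasP; rewrite has_predC.
  suff /negbTE -> : ~~ selects cl cidx (update c (blk e) (Some e)) u.2 by rewrite mulr0.
  apply/allP => /(_ f fu); rewrite /update bf eqxx => /eqP [efe].
  by rewrite efe eqxx in nfe.
have := Hnull _ Hc'; rewrite (eval_filter_split _ _ _ _ (sole_in_block e)) Hclash addr0 => <-.
rewrite /eval big_map; apply: eq_big_seq => u; rewrite mem_filter => /andP [Hl ux] /=.
rewrite (selects_pull _ _ _ (allP He u ux)) selects_update; last first.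
  move=> f; rewrite mem_filter => /andP [nfe fu] bf.
  by move: (allP Hl f fu); rewrite (negbTE nfe) bf eqxx.
by rewrite /update eqxx eqxx.
Qed.

Lemma ideal_msum_clash e x :
  all (has_edge e) x -> ideal (msum (filter (predC (sole_in_block e)) x)).
Proof.
move=> He; apply: ideal_map => u; rewrite mem_filter => /andP [nlone ux].
have [f fu /norP [nfe /negbNE /eqP bf]] :
    exists2 f, f \in u.2 & ~~ ((f == e) || (blk f != blk e)).
  by apply/hasP; rewrite has_predC.
apply: ideal_scale; apply: (monomial_clash _ _ _ _ _ (allP He u ux) fu); first by rewrite eq_sym.
exact: cidx_inj.
Qed.

Lemma msum_strip e x : all (has_edge e) x ->
  AL_eq (msum x) (sandwich 1 (proj E0 e) (msum (strip e x)) [::]).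
Proof.
move=> He; rewrite /sandwich /msum /strip -!map_comp; apply: AL_eq_map => u ux /=.
by rewrite mul1r cats0; apply: AL_weq_scale; apply: monomial_pull; apply: (allP He).
Qed.

Lemma complete_cons_free e F t :
  tilde (blk e) t -> (forall f, f \in e :: F -> t != Some f) ->
  complete_on F -> complete_on (e :: F).
Proof.
move=> Ht Hfree IH x Hx Hnull.
set xe := filter (has_edge e) x; set x0 := filter (predC (has_edge e)) x.
have He : all (has_edge e) xe by apply: filter_all.
have Hnull0 : eval_null x0 by apply: eval_null_drop Ht Hfree Hx Hnull.
have Hnulle : eval_null xe.
  move=> c Hc; have := Hnull c Hc.
  by rewrite (eval_filter_split _ _ _ _ (has_edge e)) (Hnull0 c Hc) addr0.
apply: AL_eq_ideal (msum_filter_split x (has_edge e)) _; apply: ideal_cat.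
  apply: AL_eq_ideal (msum_filter_split xe (sole_in_block e)) _; apply: ideal_cat.
    have Hg : all (has_edge e) (filter (sole_in_block e) xe).
      by apply/allP => u; rewrite mem_filter => /andP [_ /(allP He)].
    apply: AL_eq_ideal (msum_strip Hg) _; apply: ideal_sandwich.
    apply: IH (eval_null_strip He Hnulle).
    by apply/edges_in_strip/edges_in_filter/edges_in_filter.
  exact: ideal_msum_clash.
by apply: IH Hnull0; apply: edges_in_drop.
Qed.

(* When [e :: others] enumerates a block in [S], relation (CK2)
   [v0 = e e^* + \sum_(f in others) f f^*] rewrites a term [t] containing [e]
   as [expand e others t]. *)
Definition expand e (others : seq E1) (t : K * seq E1) : seq (K * seq E1) :=
  (t.1, filter (predC1 e) t.2) ::
  [seq (- t.1, f :: filter (predC1 e) t.2) | f <- others].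

Section Block.
Variables (e : E1) (others : seq E1).
Hypothesis S_block : S (cl e).
Hypothesis uniq_block : uniq (e :: others).
Hypothesis mem_block : forall f, f \in e :: others <-> cl f = cl e.

Lemma msum_expand t : has_edge e t -> AL_eq (msum [:: t]) (msum (expand e others t)).
Proof.
move=> et; set T' := filter (predC1 e) t.2.
have ck2 := AL_eq_sandwich t.1 [::] [::] (monomial_CK2 K r s_v0 T' S_block uniq_block mem_block).
have pull := AL_weq_scale t.1 (monomial_pull K s r cl S v0 et).
have Hm : AL_eq [:: (t.1, monomial v0 T')]
    ([:: (t.1, monomial v0 t.2)] ++ [seq (t.1, monomial v0 (f :: T')) | f <- others]).
  apply: AL_eq_trans _ (AL_eq_cat (AL_eq_sym pull) (AL_eq_refl s r cl S _)).
  move: ck2; rewrite /sandwich /= mulr1 !cats0 -map_comp.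
  by rewrite (eq_map (g := fun f => (t.1, monomial v0 (f :: T')))) // => f /=; rewrite mulr1 cats0.
apply: AL_eq_trans (AL_eq_transpose Hm) _.
suff -> : msum (expand e others t) = [:: (t.1, monomial v0 T')] ++
    fsum_opp [seq (t.1, monomial v0 (f :: T')) | f <- others] by apply: AL_eq_refl.
rewrite /fsum_opp /sandwich /msum /expand /= -!map_comp; congr (_ :: _).
by apply: eq_map => f /=; rewrite mulN1r cats0.
Qed.

Lemma eval_expand c t : admissible c -> has_edge e t ->
  eval c (expand e others t) = eval c [:: t].
Proof.
move=> Hc et; set T' := filter (predC1 e) t.2.
have [f0 f0_block cf0] : exists2 f0, f0 \in e :: others & c (blk e) = Some f0.
  have := Hc (blk e) (ex_intro _ (cl e) erefl).
  case: (c (blk e)) => [f /= bf|[Y [/cidx_inj -> //]]].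
  by exists f => //; apply/mem_block; apply: cidx_inj.
have sel_other f : f \in others -> (c (blk f) == Some f) = (f0 == f).
  move=> fo; have /mem_block bf : f \in e :: others by rewrite inE fo orbT.
  by rewrite /block_index bf -/(blk e) cf0 (inj_eq (@Some_inj _)).
rewrite /eval /expand big_cons big_map !big_cons !big_nil !addr0 /=.
rewrite (selects_pull _ _ _ et) cf0 -/T' (inj_eq (@Some_inj _)).
under eq_big_seq => f fo do rewrite sel_other //.
case: (selects cl cidx c T'); last first.
  by rewrite big1 => [|f _]; rewrite ?andbF ?mulr0 ?addr0.
rewrite -mulr_sumr; under eq_bigr do rewrite andbT.
rewrite -natr_sum -big_mkcond sum1_count andbT.
case/andP: uniq_block => eNo uo.
have -> : count (eq_op f0) others = (f0 \in others) :> nat.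
  by rewrite -count_uniq_mem //; apply: eq_count => f; rewrite /= eq_sym.
move: f0_block; rewrite inE => /orP [/eqP ->|fo].
  by rewrite eqxx (negbTE eNo) mulr0 addr0.
have /negbTE -> : f0 != e by apply: contraNneq eNo => <-.
by rewrite fo mulNr !mulr1 mulr0 addrN.
Qed.

Lemma msum_expand_seq x : all (has_edge e) x ->
  AL_eq (msum x) (msum (flatten (map (expand e others) x))).
Proof.
move=> He; rewrite /msum map_flatten -map_comp.
have -> : [seq (t.1, monomial v0 t.2) | t <- x] = flatten [seq msum [:: t] | t <- x].
  by elim: (x) => //= t xs ->.
apply: AL_eq_flatten => t tx.
exact: (msum_expand (allP He t tx)).
Qed.

Lemma eval_expand_seq c x : admissible c -> all (has_edge e) x ->
  eval c (flatten (map (expand e others) x)) = eval c x.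
Proof.
move=> Hc He; transitivity (\sum_(t <- x) eval c (expand e others t)).
  by rewrite /eval big_flatten big_map.
rewrite (eq_big_seq _ (fun t tx => eval_expand Hc (allP He t tx))).
by rewrite /eval; apply: eq_bigr => t _; rewrite big_seq1.
Qed.

End Block.

Lemma block_enum e : S (cl e) ->
  exists2 others, uniq (e :: others) & forall f, f \in e :: others <-> cl f = cl e.
Proof.
move=> S_block; have [l Hl] := S_fin S_block.
exists (filter (predC1 e) (undup l)).
  by rewrite /= mem_filter /= eqxx filter_uniq ?undup_uniq.
move=> f; rewrite inE mem_filter mem_undup /=.
split=> [/orP [/eqP -> // | /andP [_ /Hl //]]|].
by move=> Hf; case: eqVneq => //= _; apply/Hl.
Qed.

Lemma edges_in_expand e others F t : {subset others <= F} ->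
  edges_in (e :: F) [:: t] -> edges_in F (expand e others t).
Proof.
move=> sub_others Ht; have /andP [HT' _] := edges_in_strip Ht.
rewrite /edges_in /= HT' /=; apply/allP => u /mapP [f fo ->] /=.
by rewrite sub_others.
Qed.

Lemma complete_cons_block e F : S (cl e) -> (forall f, cl f = cl e -> f \in e :: F) ->
  complete_on F -> complete_on (e :: F).
Proof.
move=> S_block blockF IH x Hx Hnull.
have [others uniq_block mem_block] := block_enum S_block.
have sub_others : {subset others <= F}.
  move=> f fo; case/andP: uniq_block => eNo _.
  have /mem_block /blockF : f \in e :: others by rewrite inE fo orbT.
  by rewrite inE; case/orP => // /eqP fe; rewrite -fe fo in eNo.
set xe := filter (has_edge e) x.
have He : all (has_edge e) xe by apply: filter_all.
set x' := filter (predC (has_edge e)) x ++ flatten (map (expand e others) xe).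
have Hx' : edges_in F x'.
  rewrite /x' /edges_in all_cat; apply/andP; split; first exact: (edges_in_drop Hx).
  apply/allP => u /flattenP [_ /mapP [t tx ->] ut].
  have Ht : edges_in (e :: F) [:: t].
    by rewrite /edges_in /= (allP (edges_in_filter (has_edge e) Hx) t tx).
  exact: (allP (edges_in_expand sub_others Ht)).
have Hnull' : eval_null x'.
  move=> c Hc; rewrite /x' eval_cat -(Hnull c Hc).
  rewrite (eval_filter_split _ _ _ x (has_edge e)) addrC.
  by rewrite (eval_expand_seq S_block uniq_block mem_block Hc He).
apply: AL_eq_ideal (IH x' Hx' Hnull').
apply: AL_eq_trans (msum_filter_split x (has_edge e)) _.
apply: (AL_eq_trans (y := msum (filter (predC (has_edge e)) x) ++ msum xe)).
  by apply: AL_eq_coef => w; rewrite !coef_cat addrC.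
rewrite /x' [msum (_ ++ _)]map_cat; apply: AL_eq_cat (AL_eq_refl s r cl S _) _.
exact: (msum_expand_seq S_block uniq_block mem_block He).
Qed.

Lemma complete_on_all F : complete_on F.
Proof.
elim: F => [|e F IH]; first exact: complete_nil.
have [[t [Ht Hfree]]|no_free] :=
  classic (exists t, tilde (blk e) t /\ forall f, f \in e :: F -> t != Some f).
  exact: complete_cons_free Ht Hfree IH.
apply: complete_cons_block IH.
  apply: NNPP => nS; apply: no_free; exists None.
  by split=> //; exists (cl e).
move=> f Hf; apply: NNPP => /negP fN; apply: no_free; exists (Some f); split.
  by rewrite /= /block_index Hf.
by move=> g gF; apply: contraNneq fN => [[->]].
Qed.

Lemma ideal_of_eval_null x : eval_null x -> ideal (msum x).
Proof.
move=> Hnull; apply: (@complete_on_all (flatten (map snd x)) x _ Hnull).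
apply/allP => t tx.
by apply/allP => f ft; apply/flattenP; exists t.2 => //; apply: map_f.
Qed.

End Completeness.

Lemma pdecP (P : Prop) : reflect P (pdec P).
Proof. by rewrite /pdec; case: excluded_middle_informative => H; constructor. Qed.

Section BranchingSystem.
Variables (E0 E1 : countType) (r : E1 -> E0) (Cty : Type) (cl : E1 -> Cty)
  (S : Cty -> Prop) (v0 : E0) (idx : E0 -> nat) (cidx : Cty -> nat)
  (cell : seq (option E1) -> R * R) (piece : E1 -> seq (option E1) -> R * R)
  (f g : E1 -> R -> R).
Hypothesis cidx_pos : forall Y, (0 < cidx Y)%N.
Hypothesis cidx_enum : forall Y i, (0 < i)%N -> (i < cidx Y)%N -> exists Z, cidx Z = i.
Hypothesis Hcell : nested_partition cl S v0 idx cidx cell.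
Hypothesis Hf : edge_maps r cl S idx cidx cell piece f g.
Local Notation valid := (validAddr cl S cidx).
Local Notation tilde := (inTilde cl S cidx).
Local Notation blk := (block_index cl cidx).
Local Notation Rset := (Defs.Rset cl S cidx cell).

Lemma inTilde_block k t : tilde k t -> exists Y, cidx Y = k.
Proof. by case: t => [e /= <-|[Y [HY _]]]; [exists (cl e)|exists Y]. Qed.

Lemma validAddr_rcons a t : valid (rcons a t) <-> valid a /\ tilde (size a).+1 t.
Proof.
split=> [Ha|[Ha Ht] k].
  split; last by have := Ha (size a); rewrite size_rcons nth_rcons ltnn eqxx; apply.
  by move=> k ka; have := Ha k; rewrite size_rcons nth_rcons ka; apply; apply: ltnW.
rewrite size_rcons ltnS nth_rcons leq_eqVlt => /orP [/eqP ->|ka].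
  by rewrite ltnn eqxx.
by rewrite ka; apply: Ha.
Qed.

Lemma validAddr_take n a : valid a -> valid (take n a).
Proof.
move=> Ha k; rewrite size_take_min leq_min => /andP [kn ka].
by rewrite nth_take //; apply: Ha.
Qed.

Lemma cell_rcons_sub a t y : valid (rcons a t) -> Ico (cell (rcons a t)) y -> Ico (cell a) y.
Proof.
move=> /validAddr_rcons [Ha Ht] Hy.
have [_ [_ Hcover]] := Hcell.2 a Ha (inTilde_block Ht).
by apply/Hcover; exists t.
Qed.

Lemma cell_take a y n : valid a -> Ico (cell a) y -> Ico (cell (take n a)) y.
Proof.
elim/last_ind: a n => [|a t IH] n Ha Hy; first by [].
have [Hs|Hs] := leqP (size (rcons a t)) n; first by rewrite take_oversize.
move: Hs; rewrite size_rcons ltnS => Hs.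
rewrite -cats1 takel_cat //; apply: IH; first by have [] := (validAddr_rcons a t).1 Ha.
exact: cell_rcons_sub Hy.
Qed.

(* the cells of a fixed stage are pairwise disjoint, so a point determines its address *)
Lemma cell_prefix a b y : valid a -> valid b -> (size b <= size a)%N ->
  Ico (cell a) y -> Ico (cell b) y -> b = take (size b) a.
Proof.
move=> Ha; elim/last_ind: b => [|b t IH] Hb Hs Hya Hyb; first by rewrite take0.
have [Hb' Ht] := (validAddr_rcons b t).1 Hb.
move: Hs; rewrite size_rcons => Hs.
have Eb := IH Hb' (ltnW Hs) Hya (cell_rcons_sub Hb Hyb).
rewrite (take_nth None Hs) -Eb; congr rcons.
set t' := nth None a (size b).
have Ht' : tilde (size b).+1 t' by apply: Ha.
have Hy' : Ico (cell (rcons b t')) y by rewrite Eb -take_nth //; apply: cell_take.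
apply: NNPP => ne.
have [_ [Hdisj _]] := Hcell.2 b Hb' (inTilde_block Ht).
exact: (Hdisj t t' Ht Ht' ne y (conj Hyb Hy')).
Qed.

Lemma cell_nonempty a : valid a -> Rlt (fst (cell a)) (snd (cell a)).
Proof.
elim/last_ind: a => [|a t _] Ha.
  by rewrite Hcell.1; apply: lt_INR; apply/ltP.
have [Ha' Ht] := (validAddr_rcons a t).1 Ha.
by have [Hne _] := Hcell.2 a Ha' (inTilde_block Ht); apply: Hne.
Qed.

Lemma Rset_address a y e : valid a -> Ico (cell a) y -> (blk e <= size a)%N ->
  Rset e y <-> nth None a (blk e).-1 = Some e.
Proof.
move=> Ha Hy Hk; have Hp := cidx_pos (cl e).
have Hk1 : ((blk e).-1 < size a)%N by rewrite prednK.
split=> [[b [[Hb Hsb] Hyb]]|He].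
  have Hvb : valid (rcons b (Some e)).
    by apply/validAddr_rcons; split=> //=; rewrite Hsb prednK.
  have := cell_prefix Ha Hvb _ Hy Hyb; rewrite size_rcons Hsb prednK // => /(_ Hk) Eb.
  have := congr1 (fun s => nth None s (blk e).-1) Eb.
  by rewrite nth_rcons Hsb ltnn eqxx nth_take ?prednK // => <-.
exists (take (blk e).-1 a); split.
  by split; [apply: validAddr_take | rewrite size_takel // ltnW].
by rewrite -He -take_nth // prednK //; apply: cell_take.
Qed.

(* [pi (e e^* )] multiplies by the indicator of [R_e]: [g e] maps [R_e] into
   [D_{r(e)}] and [f e] undoes it. *)
Lemma pi_projs (K : fieldType) y T :
  pi_word r cl S idx cidx cell f g (flatten [seq proj E0 e | e <- T]) (fun _ => 1 : K) y =
  (all (fun e => pdec (Rset e y)) T)%:R.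
Proof.
elim: T => [|e T IH] //=; rewrite /pi_gen.
case: pdecP => [[b [Jb Hyb]]|] //=.
have [_ [_ [Hcover Hmaps]]] := Hf e.
have [Hg Hfg] := (Hmaps b Jb).2 y Hyb.
case: pdecP => [_|[]]; last by apply/Hcover; exists b.
by rewrite Hfg IH.
Qed.

Definition address (c : nat -> option E1) n := mkseq (fun k => c k.+1) n.

Lemma validAddr_address c n : admissible cl S cidx c ->
  (forall k, (k < n)%N -> exists Y, (k < cidx Y)%N) -> valid (address c n).
Proof.
move=> Hc Hn k; rewrite size_mkseq => kn; rewrite nth_mkseq //; apply: Hc.
have [Y] := Hn k kn; rewrite leq_eqVlt => /orP [/eqP Ek|kY]; first by exists Y.
exact: cidx_enum kY.
Qed.

Lemma pi_projs_address (K : fieldType) c n T : admissible cl S cidx c ->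
  (forall k, (k < n)%N -> exists Y, (k < cidx Y)%N) -> {in T, forall e, blk e <= n}%N ->
  pi_word r cl S idx cidx cell f g (flatten [seq proj E0 e | e <- T]) (fun _ => 1 : K)
    (fst (cell (address c n))) = (selects cl cidx c T)%:R.
Proof.
move=> Hc Hn HT; set a := address c n.
have Ha : valid a by apply: validAddr_address.
have Hy : Ico (cell a) (fst (cell a)) := conj (Rle_refl _) (cell_nonempty Ha).
rewrite pi_projs; congr ((nat_of_bool _)%:R); apply: eq_in_all => e eT.
have [e_pos en] := (cidx_pos (cl e), HT e eT).
have ea : (blk e <= size a)%N by rewrite size_mkseq.
by apply/pdecP/eqP; rewrite (Rset_address Ha Hy ea) nth_mkseq ?prednK.
Qed.

Lemma pi_x_elt_eval (K : fieldType) c (g0 : K) terms : admissible cl S cidx c ->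
  exists y, pi_elt r cl S idx cidx cell f g (x_elt v0 g0 terms) (fun _ => 1) y =
    eval cl cidx c ((g0, [::]) :: terms).
Proof.
move=> Hc; set n := \max_(e <- flatten [seq t.2 | t <- terms]) blk e.
have Hn k : (k < n)%N -> exists Y, (k < cidx Y)%N.
  rewrite ltnNge => /negP kn; apply: NNPP => noY; apply/kn/bigmax_leqP_seq => e _ _.
  by rewrite leqNgt; apply/negP => ke; apply: noY; exists (cl e).
have HT t : t \in terms -> {in t.2, forall e, blk e <= n}%N.
  move=> tt e et; apply: leq_bigmax_seq => //.
  by apply/flattenP; exists t.2 => //; apply: map_f.
have Ha := validAddr_address Hc Hn.
exists (fst (cell (address c n))).
have Hy0 : Ico (Dv idx v0) (fst (cell (address c n))).
  rewrite -Hcell.1 -(take0 (address c n)); apply: cell_take (Ha) _.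
  exact: conj (Rle_refl _) (cell_nonempty Ha).
rewrite /pi_elt /eval /x_elt !big_cons big_map /= /pi_gen; case: pdecP => // _.
rewrite !mulr1; congr (_ + _); apply: eq_big_seq => t tt.
by rewrite (pi_projs_address _ Hc Hn (HT t tt)).
Qed.

End BranchingSystem.

Theorem lemma4p2
  (K : fieldType) (E0 E1 : countType) (s r : E1 -> E0)
  (Cty : Type) (cl : E1 -> Cty) (S : Cty -> Prop) (v0 : E0)
  (* the separated graph (E,C): C = the fibres of cl, blocks nonempty,
     each block inside some s^{-1}(v) *)
  (cl_surj : forall Y, exists e, cl e = Y)
  (cl_src : forall e f, cl e = cl f -> s e = s f)
  (s_v0 : forall e, s e = v0)
  (r_inj : injective r)
  (S_fin : forall Y, S Y -> exists l : seq E1, forall e, (e \in l) <-> cl e = Y)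
  (idx : E0 -> nat) (idx_inj : injective idx)
  (idx_enum : forall v i, (i < idx v)%N -> exists w, idx w = i)
  (cidx : Cty -> nat) (cidx_inj : injective cidx)
  (cidx_pos : forall Y, (0 < cidx Y)%N)
  (cidx_enum : forall Y i, (0 < i)%N -> (i < cidx Y)%N -> exists Z, cidx Z = i)
  (cell : seq (option E1) -> R * R)
  (Hcell : nested_partition cl S v0 idx cidx cell)
  (piece : E1 -> seq (option E1) -> R * R) (f g : E1 -> R -> R)
  (Hf : edge_maps r cl S idx cidx cell piece f g)
  (g0 : K) (terms : seq (K * seq E1))
  (terms_ne : forall t, t \in terms -> t.2 <> [::])
  (x_nz : AL_nonzero s r cl S (x_elt v0 g0 terms)) :
  pi_elt r cl S idx cidx cell f g (x_elt v0 g0 terms) <> (fun _ _ => 0%R).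
Proof.
move=> pi_x0; apply: x_nz.
have null : eval_null cl S cidx ((g0, [::]) :: terms).
  move=> c Hc; have [y <-] := pi_x_elt_eval cidx_pos cidx_enum Hcell Hf g0 terms Hc.
  by rewrite pi_x0.
apply: AL_eq_ideal (x_elt_msum r cl S s_v0 g0 terms_ne) _.
exact: (ideal_of_eval_null r s_v0 cl_surj cidx_inj S_fin null).
Qed.
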